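(* Let $T$ be a triangulation of an unpunctured bordered surface $(S,M)$, $Q=Q_{\overline T}$ its anti-symmetric adjacency quiver, and $F_1,\dots,F_n$ the associated exchange polynomials. If $F_i=F_j$ for some $i\neq j$, then there are no arrows between $i$ and $j$ in $Q$.
   Context: $(S,M)$: compact surface (possibly non-orientable) with nonempty boundary, marked points $M\subset\partial S$ meeting every boundary component, no punctures, not a monogon/digon/triangle. Quasi-arcs: arcs (up to isotopy) not bounding a Möbius strip with one marked point, and one-sided simple closed curves; compatible = disjoint, or the unique arc and one-sided curve in a Möbius strip with one marked point. Triangulation: maximal compatible set without one-sided curves; its arcs are $1,\dots,n$. Double cover and quiver: replace each cross-cap by a cylinder to get $\tilde S$, glue two copies along new cylinder boundaries by the antipodal map (two oppositely oriented copies if $S$ orientable); $T$ lifts to $\overline T$ with lifts $i,\tilde i$ ($\tilde{\tilde i}=i$). $Q_{\overline T}$: vertices arcs (and boundary segments receiving variables) of $\overline T$; arrow $i\to j$ for each triangle where $j$ follows $i$ in the orientation; 2-cycles cancelled; $b_{ij}$ = (arrows $i\to j$) $-$ (arrows $j\to i$). It is anti-symmetric: $i\to j$ iff $\tilde j\to\tilde i$, and no arrows $i\to\tilde i$. $F_j=\prod_{b_{ij}+b_{\tilde ij}>0}x_i^{b_{ij}+b_{\tilde ij}}+\prod_{b_{ij}+b_{\tilde ij}<0}x_i^{-(b_{ij}+b_{\tilde ij})}$ over twin-pair representatives $i$. *)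

From HB Require Import structures.
From mathcomp Require Import all_boot all_order all_algebra.
From mathcomp Require Import mpoly.
Set Implicit Arguments. Unset Strict Implicit. Unset Printing Implicit Defensive.
Import Order.TTheory GRing.Theory Num.Theory.

(* Combinatorial model of a triangulation T of an unpunctured bordered      *)
(* (possibly non-orientable) surface (S,M): S cut along the arcs of T is a  *)
(* disjoint union of triangles (no punctures => no self-folded triangles).  *)
(* Triangle t has sides k : 'I_3; side k runs from corner k to corner k+1   *)
(* (mod 3) for a chosen local orientation of t.  An arc of T is a pair of   *)
(* sides glued together, either orientation-compatibly (twist = false:     *)
(* corner k <-> corner k'+1, corner k+1 <-> corner k') or with a twist      *)
(* (twist = true: corner k <-> k', k+1 <-> k'+1).  Unpaired sides are the   *)
(* boundary segments; the vertices are the marked points.                   *)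

Record tsurf := TSurf {
  ntri : nat;
  partner : {ffun 'I_ntri * 'I_3 -> option ('I_ntri * 'I_3)};
  twist : {ffun 'I_ntri * 'I_3 -> bool} }.

Notation side S := ('I_(ntri S) * 'I_3)%type.

Section Surf.
Variable S : tsurf.

Definition is_arc (s : side S) : bool := partner S s != None.

Definition tri_adj : rel 'I_(ntri S) :=
  fun t u => [exists k : 'I_3, [exists k' : 'I_3, partner S (t, k) == Some (u, k')]].

(* corner identifications induced by the side gluings; corner (t,v) is     *)
(* vertex v of triangle t *)
Definition corner_rel0 (c d : side S) : bool :=
  [exists s : side S,
    if partner S s is Some s' then
      if twist S s then
        ((c == s) && (d == s')) ||
        ((c == (s.1, ordS s.2)) && (d == (s'.1, ordS s'.2)))
      else
        ((c == s) && (d == (s'.1, ordS s'.2))) ||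
        ((c == (s.1, ordS s.2)) && (d == s'))
    else false].

Definition corner_rel : rel (side S) := fun c d => corner_rel0 c d || corner_rel0 d c.

(* a corner lying on a boundary segment (side v leaves corner v, side v-1  *)
(* enters it) *)
Definition boundary_corner (c : side S) : bool :=
  (partner S c == None) || (partner S (c.1, ord_pred c.2) == None).

(* T is a triangulation of an unpunctured bordered surface (S,M) which is   *)
(* not a monogon, digon or triangle:                                        *)
(*  - T has at least one arc (excludes the triangle; monogon and digon have *)
(*    no triangulation by triangles);                                       *)
(*  - no punctures: every marked point (class of corners) lies on the       *)
(*    boundary;                                                             *)
(*  - arcs are quasi-arcs: no arc bounds a Moebius strip with one marked    *)
(*    point, i.e. a triangle with two of its sides glued to each other     *)
(*    (necessarily with a twist) has its third side on the boundary.        *)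
Definition unpunctured_triangulation : Prop :=
  [/\ (forall s s' : side S, partner S s = Some s' ->
          [/\ partner S s' = Some s, s' <> s & twist S s' = twist S s]),
      (forall t u : 'I_(ntri S), connect tri_adj t u),
      (exists s : side S, is_arc s),
      (forall c : side S, exists2 d, connect corner_rel c d & boundary_corner d)
    & (forall (t : 'I_(ntri S)) (k k' k'' : 'I_3),
          partner S (t, k) = Some (t, k') -> k'' != k -> k'' != k' ->
          partner S (t, k'') = None) ].

(* Double cover \tilde S (orientation double cover; two oppositely oriented *)
(* copies when S is orientable).  Its triangles are pairs (t, e), e : bool  *)
(* the orientation of the lift; lifted sides are (s, e).  The twin map is   *)
(* e |-> ~~ e.  Side (s,e) is glued to (s', e (+) twist s).                 *)
(* A lifted arc/boundary segment of \overline T is a gluing class of lifted *)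
(* sides, represented by any of its members.                                *)

Definition lside := (side S * bool)%type.

Definition lpartner (x : lside) : option lside :=
  if partner S x.1 is Some s' then Some (s', addb x.2 (twist S x.1)) else None.

Definition same_ledge (x y : lside) : bool := (x == y) || (lpartner x == Some y).

Definition twin (x : lside) : lside := (x.1, ~~ x.2).

Definition lnext (x : lside) : lside :=
  ((x.1.1, if x.2 then ord_pred x.1.2 else ordS x.1.2), x.2).

(* number of arrows x -> y of Q_{\overline T} before cancelling 2-cycles:   *)
(* one for each (lifted triangle, position) where y follows x              *)
Definition narrows (x y : lside) : nat :=
  #|[set z : lside | same_ledge x z && same_ledge y (lnext z)]|.

(* Q has exactly |b_{xy}| arrows between x and y, in the direction of sign. *)
Definition bq (x y : lside) : int := ((narrows x y)%:Z - (narrows y x)%:Z)%R.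

(* twin-pair representatives: one side per arc / boundary segment of T     *)
Definition canon (s : side S) : side S :=
  if partner S s is Some s' then
    (if (enum_rank s' < enum_rank s)%N then s' else s)
  else s.
Definition is_rep (s : side S) : bool := canon s == s.

(* B: the boundary segments receiving (frozen) variables *)
Definition has_var (B : {set side S}) (s : side S) : bool := is_arc s || (s \in B).

Definition cexp (y : lside) (s : side S) : int := (bq (s, false) y + bq (s, true) y)%R.

Definition Fexch (B : {set side S}) (y : lside) : {mpoly int[#|{: side S}|]} :=
  (\prod_(s : side S | is_rep s && has_var B s && (0 < cexp y s)%R)
      'X_(enum_rank s) ^+ `|cexp y s|%N)%R
  + (\prod_(s : side S | is_rep s && has_var B s && (cexp y s < 0)%R)
      'X_(enum_rank s) ^+ `|cexp y s|%N)%R.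

Definition Farc (B : {set side S}) (s : side S) := Fexch B (s, false).

End Surf.

Arguments is_arc : clear implicits.
Arguments bq : clear implicits.
Arguments Farc : clear implicits.
Arguments Fexch : clear implicits.
Arguments unpunctured_triangulation : clear implicits.

(* Arrows of Q between lifts of i and j come from triangles of T having a side
   on i and another side on j.  If i (or j) is folded, i.e. both of its sides
   lie in one triangle, then the quasi-arc condition puts the third side of
   that triangle on the boundary, so no such triangle exists.  Otherwise no
   triangle has two sides on i, so x_i does not occur in F_i.  An exchange
   polynomial is a sum of two monomials, so F_i = F_j forces x_i to have the
   same exponent, 0, in F_j: b_ij + b_~ij = 0.  Symmetrically b_ji + b_~ji = 0,
   and the anti-symmetry b_xy = - b_yx = b_~y~x of Q turns these two equations
   into b_ij = b_~ij = 0. *)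
From HB Require Import structures.
From mathcomp Require Import all_boot all_order all_algebra.
From mathcomp Require Import mpoly.
From mathcomp Require Import zify.
Set Implicit Arguments. Unset Strict Implicit. Unset Printing Implicit Defensive.
Import Order.TTheory GRing.Theory Num.Theory.
Local Open Scope ring_scope.

Lemma mpolyX_inj (R : nzRingType) (n : nat) : injective (@mpolyX n R).
Proof.
move=> m m' /(congr1 (mcoeff m')); rewrite !mcoeffX eqxx.
by case: eqVneq => // _ /eqP; rewrite eq_sym oner_eq0.
Qed.

Lemma mpolyXD_eq (R : numDomainType) (n : nat) (a b c d : 'X_{1..n}) :
  'X_[a] + 'X_[b] = 'X_[c] + 'X_[d] :> {mpoly R[n]} -> (a + b = c + d)%MM.
Proof.
move=> E; have : (c == a) || (c == b).
  move: E => /(congr1 (mcoeff c)); rewrite !mcoeffD !mcoeffX eqxx.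
  move=> /eqP; rewrite -natrD -(natrD _ 1) eqr_nat (eq_sym c a) (eq_sym c b).
  by case: (a == c); case: (b == c).
case/orP=> /eqP cE; move: E; rewrite cE.
  by move=> /(addrI _) /mpolyX_inj ->.
by rewrite addrC addmC => /(addrI _) /mpolyX_inj ->.
Qed.

Lemma mnm_sumU_rank (T : finType) (P : pred T) (k : T -> nat) (t : T) :
  (\sum_(s | P s) U_(enum_rank s) *+ k s)%MM (enum_rank t)
  = if P t then k t else 0%N.
Proof.
rewrite mnm_sumE.
under eq_bigr => s _ do rewrite mulmnE mnm1E (inj_eq enum_rank_inj).
case: (boolP (P t)) => Pt.
  rewrite (bigD1 t) //= eqxx mul1n big1 ?addn0 // => s /andP[_ /negbTE ->].
  by rewrite mul0n.
rewrite big1 // => s Ps; have /negbTE -> : s != t by apply: contraNneq Pt => <-.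
by rewrite mul0n.
Qed.

Section ExchangePolynomial.
Variables (S : tsurf) (B : {set side S}).
Implicit Types (y : lside S) (s : side S).

Definition Fmonom y (sgn : pred int) : 'X_{1..#|{: side S}|} :=
  (\sum_(s | is_rep s && has_var B s && sgn (cexp y s))
     U_(enum_rank s) *+ `|cexp y s|%N)%MM.

Lemma FexchE y :
  Fexch S B y
  = 'X_[Fmonom y (fun c => (0 < c)%R)] + 'X_[Fmonom y (fun c => (c < 0)%R)].
Proof. by rewrite /Fexch !mprodXnE. Qed.

Lemma Fmonom_rank y s : is_rep s -> has_var B s ->
  (Fmonom y (fun c => (0 < c)%R) + Fmonom y (fun c => (c < 0)%R))%MM (enum_rank s)
  = `|cexp y s|%N.
Proof.
move=> rep_s var_s; rewrite mnmDE !mnm_sumU_rank rep_s var_s /=.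
by case: ltrgtP => [||c0]; rewrite ?addn0 // -c0.
Qed.

Lemma Fexch_eq_absz_cexp y y' s : Fexch S B y = Fexch S B y' ->
  is_rep s -> has_var B s -> `|cexp y s|%N = `|cexp y' s|%N.
Proof.
move=> E rep_s var_s; move: E; rewrite !FexchE => /mpolyXD_eq.
move=> /(congr1 (fun m : 'X_{1..#|{: side S}|} => m (enum_rank s))).
by rewrite !Fmonom_rank.
Qed.

End ExchangePolynomial.

Section Lifts.
Variable S : tsurf.
Implicit Types (x y z : lside S) (a b u w : side S).

Definition same_arc a b : bool := (a == b) || (partner S a == Some b).

Definition folded u : bool :=
  if partner S u is Some u' then u'.1 == u.1 else false.

Lemma twinK x : twin (twin x) = x.
Proof. by case: x => ? []. Qed.

Lemma lpartner_twin x : lpartner (twin x) = omap (@twin S) (lpartner x).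
Proof.
by rewrite /lpartner /=; case: (partner S x.1) => //= s'; rewrite addNb.
Qed.

Lemma same_ledge_twin x y : same_ledge (twin x) y = same_ledge x (twin y).
Proof.
rewrite /same_ledge lpartner_twin -(inj_eq (inv_inj twinK) (twin x)) twinK.
case: (lpartner x) => [x'|] //=.
by rewrite !(inj_eq (@Some_inj _)) -(inj_eq (inv_inj twinK) (twin x')) twinK.
Qed.

Lemma lnext_twin z : lnext (twin (lnext z)) = twin z.
Proof. by case: z => [[t k] []]; rewrite /lnext /twin /= ?ord_predK ?ordSK. Qed.

Lemma lnext_neq z : (lnext z).1 != z.1.
Proof.
case: z => [[t k] e]; apply/eqP => /(congr1 (fun s : side S => val s.2)).
by case: e; case: k => [[|[|[|k]]] hk].
Qed.

(* z |-> twin (lnext z) is an involution exchanging the witnesses of the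
   arrows x -> y with those of the arrows twin y -> twin x. *)
Lemma narrows_twin x y : narrows x y = narrows (twin y) (twin x).
Proof.
have flipK : involutive (fun z => twin (lnext z)).
  by move=> z; rewrite lnext_twin twinK.
rewrite /narrows -(card_preimset _ (inv_inj flipK)).
by apply: eq_card => z; rewrite !inE lnext_twin andbC !same_ledge_twin.
Qed.

Lemma bq_twin x y : bq S x y = bq S (twin y) (twin x).
Proof. by rewrite /bq narrows_twin (narrows_twin y x). Qed.

Lemma bq_antisym x y : bq S y x = - bq S x y.
Proof. by rewrite /bq opprB. Qed.

Lemma bq_lifts_eq0 u w :
  cexp (w, false) u = 0 -> cexp (u, false) w = 0 ->
  forall e e', bq S (u, e) (w, e') = 0.
Proof.
have swap : bq S (w, true) (u, false) = bq S (u, true) (w, false) := bq_twin _ _.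
have anti : bq S (w, false) (u, false) = - bq S (u, false) (w, false) :=
  bq_antisym _ _.
rewrite /cexp swap anti => cu cw.
have bq_ff : bq S (u, false) (w, false) = 0 by lia.
have bq_tf : bq S (u, true) (w, false) = 0 by lia.
case; case; rewrite ?bq_ff ?bq_tf // bq_twin bq_antisym /twin /=.
all: by rewrite ?bq_ff ?bq_tf oppr0.
Qed.

Lemma same_ledge_arc x z : same_ledge x z -> same_arc x.1 z.1.
Proof.
rewrite /same_ledge /same_arc /lpartner.
case/orP => [/eqP -> | ]; first by rewrite eqxx.
by case: (partner S x.1) => //= s' /eqP [<-]; rewrite eqxx orbT.
Qed.

Lemma narrows_eq0 x y :
  (forall a b, same_arc x.1 a -> same_arc y.1 b -> a.1 = b.1 -> a = b) ->
  narrows x y = 0%N.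
Proof.
move=> tri_sides; apply: eq_card0 => z; rewrite inE.
apply/andP => -[/same_ledge_arc xz /same_ledge_arc yz].
by have := lnext_neq z; rewrite -(tri_sides _ _ xz yz) ?eqxx.
Qed.

Lemma folded_same_tri u a : folded u -> same_arc u a -> a.1 = u.1.
Proof.
rewrite /folded /same_arc; case: (partner S u) => // u' /eqP u'1.
by case/orP => /eqP; [move=> <- | case=> <-].
Qed.

Lemma cexp_unfolded_eq0 u : ~~ folded u -> cexp (u, false) u = 0.
Proof.
move=> unfolded_u; suff self0 e e' : narrows (u, e) (u, e') = 0%N.
  by rewrite /cexp /bq !self0.
apply: narrows_eq0 => a b /=; move: unfolded_u; rewrite /folded /same_arc.
case: (partner S u) => [u'|] /=; last by rewrite !orbF => _ /eqP <- /eqP <-.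
move=> u'1 /orP[/eqP <- | /eqP [<-]] /orP[/eqP <- | /eqP [<-]] ab //.
all: by move: u'1; rewrite ab eqxx.
Qed.

End Lifts.

Section Gluing.
Variable S : tsurf.
Implicit Types (x y z : lside S) (a b u w s : side S).

Hypothesis gluingK : forall s s', partner S s = Some s' ->
  partner S s' = Some s /\ twist S s' = twist S s.

Hypothesis folded_third_boundary : forall (t : 'I_(ntri S)) (k k' k'' : 'I_3),
  partner S (t, k) = Some (t, k') -> k'' != k -> k'' != k' ->
  partner S (t, k'') = None.

Lemma same_arc_sym a b : same_arc a b = same_arc b a.
Proof.
suff imp a' b' : same_arc a' b' -> same_arc b' a' by apply/idP/idP; apply: imp.
case/orP => [/eqP -> | /eqP /gluingK [ba _]]; first by rewrite /same_arc eqxx.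
by rewrite /same_arc ba eqxx orbT.
Qed.

Lemma same_arc_trans a b c : same_arc a b -> same_arc b c -> same_arc a c.
Proof.
case/orP => [/eqP -> // | /eqP ab]; case/orP => [/eqP <- | /eqP bc].
  by rewrite /same_arc ab eqxx orbT.
have [ba _] := gluingK ab.
by move: bc; rewrite ba => -[<-]; rewrite /same_arc eqxx.
Qed.

Lemma is_arc_same_arc a b : same_arc a b -> is_arc S a -> is_arc S b.
Proof.
case/orP => [/eqP <- // | /eqP /gluingK [ba _]] _.
by rewrite /is_arc ba.
Qed.

Lemma folded_tri_arc u b : folded u -> is_arc S b -> b.1 = u.1 -> same_arc u b.
Proof.
rewrite /folded /is_arc /same_arc.
case pu: (partner S u) => [u'|] // /eqP.
case: u pu => t k; case: u' => t' k'; case: b => tb kb /= pu t't arc_b tbt.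
subst t' tb.
case: (eqVneq kb k) => [-> | kbk]; first by rewrite eqxx.
case: (eqVneq kb k') => [-> | kbk']; first by rewrite eqxx orbT.
by rewrite (folded_third_boundary pu kbk kbk') in arc_b.
Qed.

Lemma bq_folded_eq0 u w : folded u -> is_arc S w -> ~~ same_arc u w ->
  forall e e', bq S (u, e) (w, e') = 0.
Proof.
move=> fold_u arc_w uw e e'.
have apart a b : same_arc u a -> same_arc w b -> a.1 != b.1.
  move=> ua wb; apply/eqP => ab.
  have ub : same_arc u b.
    apply: folded_tri_arc => //; first exact: is_arc_same_arc wb arc_w.
    by rewrite -ab (folded_same_tri fold_u ua).
  by move: uw; rewrite (same_arc_trans ub) // same_arc_sym.
rewrite /bq !narrows_eq0 // => a b ua wb ab.
- by move: (apart _ _ wb ua); rewrite ab eqxx.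
- by move: (apart _ _ ua wb); rewrite ab eqxx.
Qed.

Lemma lpartnerK x x' : lpartner x = Some x' -> lpartner x' = Some x.
Proof.
rewrite /lpartner; case E: (partner S x.1) => [s'|] // [<-] /=.
have [-> ->] := gluingK E.
by rewrite -addbA addbb addbF; case: x {E}.
Qed.

Lemma bq_lpartner x x' y : lpartner x = Some x' -> bq S x y = bq S x' y.
Proof.
move=> xx'; have same_x z : same_ledge x z = same_ledge x' z.
  by rewrite /same_ledge xx' (lpartnerK xx') !(inj_eq (@Some_inj _)) orbC.
rewrite /bq /narrows; congr (_%:Z - _%:Z).
all: by apply: eq_card => z; rewrite !inE same_x.
Qed.

Lemma cexp_partner y s s' : partner S s = Some s' -> cexp y s = cexp y s'.
Proof.
move=> ss'; rewrite /cexp.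
rewrite (@bq_lpartner (s, false) (s', twist S s)) ?/lpartner /= ?ss' //.
rewrite (@bq_lpartner (s, true) (s', ~~ twist S s)) ?/lpartner /= ?ss' //.
by case: (twist S s); rewrite // addrC.
Qed.

Lemma cexp_canon y s : cexp y (canon s) = cexp y s.
Proof.
rewrite /canon; case ss': (partner S s) => [s'|] //.
by case: ifP => // _; rewrite (cexp_partner y ss').
Qed.

Lemma canon_is_rep s : is_rep (canon s).
Proof.
rewrite /is_rep /canon; case ss': (partner S s) => [s'|]; last by rewrite ss'.
case: ifP => lt_s's; last by rewrite ss' lt_s's.
by have [-> _] := gluingK ss'; rewrite ltnNge ltnW.
Qed.

Lemma canon_has_var (B : {set side S}) s : is_arc S s -> has_var B (canon s).
Proof.
rewrite /has_var /is_arc /canon; case ss': (partner S s) => [s'|] // _.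
by have [s's _] := gluingK ss'; case: ifP; rewrite ?s's ?ss'.
Qed.

Lemma cexp_eq0_transfer (B : {set side S}) y y' s :
  is_arc S s -> Fexch S B y = Fexch S B y' -> cexp y s = 0 -> cexp y' s = 0.
Proof.
move=> arc_s E; rewrite -!(cexp_canon _ s) => /eqP; rewrite -absz_eq0 => /eqP.
rewrite (Fexch_eq_absz_cexp E (canon_is_rep s) (canon_has_var B arc_s)).
by move=> /eqP; rewrite absz_eq0 => /eqP.
Qed.

End Gluing.

Theorem lemma4p13 (S : tsurf) (B : {set side S}) (i j : side S) :
  unpunctured_triangulation S ->
  is_arc S i -> is_arc S j ->
  i != j -> partner S i != Some j ->
  Farc S B i = Farc S B j ->
  forall ei ej : bool, bq S (i, ei) (j, ej) = 0%R.
Proof.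
move=> [gluing _ _ _ folded_third] arc_i arc_j ij pij E ei ej.
have gluingK s s' : partner S s = Some s' ->
    partner S s' = Some s /\ twist S s' = twist S s.
  by move=> /gluing [].
have not_ij : ~~ same_arc i j by rewrite /same_arc negb_or ij pij.
have [fold_i | unfold_i] := boolP (folded i).
  exact: (bq_folded_eq0 gluingK folded_third fold_i arc_j not_ij).
have [fold_j | unfold_j] := boolP (folded j).
  rewrite bq_antisym (bq_folded_eq0 gluingK folded_third fold_j arc_i) ?oppr0 //.
  by rewrite same_arc_sym.
rewrite /Farc in E; apply: bq_lifts_eq0.
- exact: (cexp_eq0_transfer gluingK arc_i E (cexp_unfolded_eq0 unfold_i)).
- exact: (cexp_eq0_transfer gluingK arc_j (esym E) (cexp_unfolded_eq0 unfold_j)).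
Qed.
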